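(* Suppose ambiguous communication benefits the sender, i.e. $V_{\mathrm{amb}} > V_{\mathrm{stat}}$. Then there exists a canonical ambiguous experiment $\Sigma$ such that $\tau^{*} \in BR(\Sigma)$ but $\tau^{*} \notin BR(\sigma)$ for every $\sigma \in \Sigma$.
   Context: Setting: $\Omega$ is a finite set of states, $A$ a finite set of receiver actions. Sender and receiver share a set of priors $P \subseteq \Delta(\Omega)$, nonempty, closed and convex; both have maxmin expected utility preferences. Payoffs are $u_s, u_r : A \times \Omega \to \mathbb{R}$. A statistical experiment with finite message set $M$ is a map $\sigma: \Omega \to \Delta(M)$, written $\sigma(m\mid\omega)$. A receiver strategy is $\tau: M \to \Delta(A)$, written $\tau(a\mid m)$. For $p \in P$ and $i \in \{s,r\}$, $u_i(p,\sigma,\tau) = \sum_{\omega,m,a} p(\omega)\sigma(m\mid\omega)\tau(a\mid m)u_i(a,\omega)$ and $u_i(\sigma,\tau) = \min_{p\in P} u_i(p,\sigma,\tau)$. An ambiguous experiment is a nonempty closed convex set $\Sigma$ of statistical experiments with a common finite message set $M$; $U_i(\Sigma,\tau) = \min_{\sigma \in \Sigma} u_i(\sigma,\tau)$. Best responses: $BR(\sigma) = \arg\max_{\tau} u_r(\sigma,\tau)$ and $BR(\Sigma) = \arg\max_{\tau} U_r(\Sigma,\tau)$, maximizing over all strategies $\tau: M \to \Delta(A)$. An experiment is canonical if its message set is $M = A$. The obedient strategy $\tau^{*}: A \to \Delta(A)$ is $\tau^{*}(a\mid a) = 1$ for all $a \in A$. The sender's value with statistical experiments is $V_{\mathrm{stat}}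 = \sup\{u_s(\sigma,\tau) : M \text{ finite}, \sigma:\Omega\to\Delta(M), \tau \in BR(\sigma)\}$, and with ambiguous experiments is $V_{\mathrm{amb}} = \sup\{U_s(\Sigma,\tau) : M \text{ finite}, \Sigma \text{ ambiguous experiment with message set } M, \tau \in BR(\Sigma)\}$ (the sender selects both the experiment and the receiver's best response). Ambiguous communication benefits the sender if $V_{\mathrm{amb}} > V_{\mathrm{stat}}$. *)

From mathcomp Require Import all_boot all_order all_algebra.
From mathcomp Require Import all_classical all_reals all_analysis.
Import ArrowAsProduct numFieldNormedType.Exports.
Set Implicit Arguments. Unset Strict Implicit. Unset Printing Implicit Defensive.
Import Order.TTheory GRing.Theory Num.Theory.
Local Open Scope classical_set_scope.
Local Open Scope ring_scope.

Section Persuasion.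
Variable R : realType.

Definition is_dist (X : finType) (p : X -> R) : Prop :=
  (forall x, 0 <= p x) /\ \sum_(x : X) p x = 1.

Variables (Om A : finType).

Definition is_experiment (M : finType) (sigma : Om -> M -> R) : Prop :=
  forall w, is_dist (sigma w).

Definition is_strategy (M : finType) (tau : M -> A -> R) : Prop :=
  forall m, is_dist (tau m).

Definition u_p (u : A -> Om -> R) (M : finType) (p : Om -> R)
    (sigma : Om -> M -> R) (tau : M -> A -> R) : R :=
  \sum_(w : Om) \sum_(m : M) \sum_(a : A) p w * sigma w m * tau m a * u a w.

Definition u_mm (P : set (Om -> R)) (u : A -> Om -> R) (M : finType)
    (sigma : Om -> M -> R) (tau : M -> A -> R) : R :=
  inf [set u_p u p sigma tau | p in P].

Definition U_amb (P : set (Om -> R)) (u : A -> Om -> R) (M : finType)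
    (Sigma : set (Om -> M -> R)) (tau : M -> A -> R) : R :=
  inf [set u_mm P u sigma tau | sigma in Sigma].

Definition is_amb_experiment (M : finType) (Sigma : set (Om -> M -> R)) : Prop :=
  Sigma !=set0 /\ closed Sigma /\ convex_set Sigma /\
  (forall sigma, Sigma sigma -> is_experiment sigma).

Definition BR (P : set (Om -> R)) (ur : A -> Om -> R) (M : finType)
    (sigma : Om -> M -> R) (tau : M -> A -> R) : Prop :=
  is_strategy tau /\
  forall tau', is_strategy tau' -> u_mm P ur sigma tau' <= u_mm P ur sigma tau.

Definition BR_amb (P : set (Om -> R)) (ur : A -> Om -> R) (M : finType)
    (Sigma : set (Om -> M -> R)) (tau : M -> A -> R) : Prop :=
  is_strategy tau /\
  forall tau', is_strategy tau' -> U_amb P ur Sigma tau' <= U_amb P ur Sigma tau.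

Definition V_stat (P : set (Om -> R)) (us ur : A -> Om -> R) : R :=
  sup [set v | exists (M : finType) (sigma : Om -> M -> R) (tau : M -> A -> R),
          is_experiment sigma /\ BR P ur sigma tau /\ v = u_mm P us sigma tau].

Definition V_amb (P : set (Om -> R)) (us ur : A -> Om -> R) : R :=
  sup [set v | exists (M : finType) (Sigma : set (Om -> M -> R)) (tau : M -> A -> R),
          is_amb_experiment Sigma /\ BR_amb P ur Sigma tau /\ v = U_amb P us Sigma tau].

(* obedient strategy on the canonical message set M = A *)
Definition obedient : A -> A -> R := fun m a => if m == a then 1 else 0.

End Persuasion.

(* Given an ambiguous experiment [Sigma] on messages [M] with a receiver best
   response [tau] that gives the sender more than [V_stat], garble every
   [sigma] in [Sigma] by [tau] into a recommendation of actions.  By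
   associativity of kernel composition the canonical experiment has the same
   payoffs under obedience as [Sigma] under [tau], so obedience is a best
   response to it.  If obedience were a best response to a single garbled
   experiment, the sender would get at least the ambiguous value from a
   statistical experiment, contradicting the choice of [Sigma].  The garbled
   family is closed because the experiments form a compact set on which
   garbling is continuous. *)
From mathcomp Require Import all_boot all_order all_algebra.
From mathcomp Require Import all_classical all_reals all_analysis.
From mathcomp Require Import ring.
Import ArrowAsProduct numFieldNormedType.Exports.
Set Implicit Arguments.
Unset Strict Implicit.
Import Order.TTheory GRing.Theory Num.Theory.
Local Open Scope classical_set_scope.
Local Open Scope ring_scope.

Lemma continuous_into_prod (X : topologicalType) (I : eqType)
    (K : I -> topologicalType) (f : X -> forall i, K i) :
  (forall i, continuous (fun x => f x i)) -> continuous f.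
Proof.
move=> cf x; apply/cvg_sup => i.
have surj : (fun g : forall j, K j => g i) @` setT = setT.
  by rewrite eqEsubset; split => // v _; exists (dfwith (f x) i v); rewrite ?dfwithin.
apply/cvg_image => // B /= /cf; rewrite nbhs_simpl => hB.
by exists ((fun g : forall j, K j => g i) @^-1` B) => //; exact: image_preimage.
Qed.

Lemma continuous_sum (R : numFieldType) (X : topologicalType) (J : Type)
    (s : seq J) (g : J -> X -> R) :
  (forall j, continuous (g j)) -> continuous (fun x => \sum_(j <- s) g j x).
Proof.
move=> cg; elim: s => [|j s IH] x.
  by under eq_fun do rewrite big_nil; exact: cvg_cst.
by under eq_fun do rewrite big_cons; apply: cvgD; [exact: cg | exact: IH].
Qed.

Section Kernels.
Variable R : realType.
Implicit Types X Y Z : finType.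

Definition kcomp X Y Z (f : X -> Y -> R) (g : Y -> Z -> R) : X -> Z -> R :=
  fun x z => \sum_(y : Y) f x y * g y z.

Lemma kcomp_dist X Y Z (f : X -> Y -> R) (g : Y -> Z -> R) :
  (forall x, is_dist (f x)) -> (forall y, is_dist (g y)) ->
  forall x, is_dist (kcomp f g x).
Proof.
move=> hf hg x; split => [z|].
  by apply: sumr_ge0 => y _; apply: mulr_ge0; [exact: (hf x).1 | exact: (hg y).1].
rewrite /kcomp exchange_big /= -[RHS](hf x).2.
by apply: eq_bigr => y _; rewrite -mulr_sumr (hg y).2 mulr1.
Qed.

Lemma kcompA X Y Z (W : finType) (f : X -> Y -> R) (g : Y -> Z -> R) (h : Z -> W -> R) :
  kcomp (kcomp f g) h = kcomp f (kcomp g h).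
Proof.
apply/funext => x; apply/funext => v; rewrite /kcomp.
under eq_bigr do rewrite mulr_suml.
rewrite exchange_big /=; apply: eq_bigr => y _.
by rewrite big_distrr /=; apply: eq_bigr => z _; rewrite mulrA.
Qed.

Lemma kcomp_obedient X (A : finType) (t : X -> A -> R) :
  kcomp t (@obedient R A) = t.
Proof.
apply/funext => x; apply/funext => a; rewrite /kcomp /obedient.
rewrite (bigD1 a) //= eqxx mulr1 big1 ?addr0 // => a' /negbTE ->.
by rewrite mulr0.
Qed.

Lemma obedient_strategy (A : finType) : is_strategy (@obedient R A).
Proof.
move=> m; split=> [a|]; first by rewrite /obedient; case: (m == a).
rewrite (bigD1 m) //= /obedient eqxx big1 ?addr0 // => a /negbTE.
by rewrite eq_sym => ->.
Qed.

Local Open Scope convex_scope.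

Lemma conv_app2 X Y (f1 f2 : X -> Y -> R) (l : {i01 R}) x y :
  ((f1 : convex_lmodType (X -> Y -> R)) <| l |> f2) x y =
  l%:num * f1 x y + (1 - l%:num) * f2 x y.
Proof. by []. Qed.

Lemma kcomp_conv X Y Z (f1 f2 : X -> Y -> R) (g : Y -> Z -> R) (l : {i01 R}) :
  kcomp ((f1 : convex_lmodType (X -> Y -> R)) <| l |> f2) g =
  (kcomp f1 g : convex_lmodType (X -> Z -> R)) <| l |> kcomp f2 g.
Proof.
apply/funext => x; apply/funext => z; rewrite conv_app2 /kcomp.
by rewrite !mulr_sumr -big_split /=; apply: eq_bigr => y _; rewrite conv_app2; ring.
Qed.

Lemma continuous_kcomp X Y Z (g : Y -> Z -> R) :
  continuous (fun f : X -> Y -> R => kcomp f g).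
Proof.
apply: (@continuous_into_prod _ X (fun _ => Z -> R)) => x.
apply: (@continuous_into_prod _ Z (fun _ => R)) => z.
apply: continuous_sum => y f.
apply: cvgMr_tmp; first exact: nbhs_filter.
exact: (continuous_comp (@proj_continuous _ _ x f) (@proj_continuous _ _ y (f x))).
Qed.

Lemma compact_experiments X Y (S : set (X -> Y -> R)) :
  closed S -> (forall f, S f -> is_experiment f) -> compact S.
Proof.
move=> cS hS.
pose cube := [set f : X -> Y -> R | forall x y, `[(0:R), 1]%classic (f x y)].
have -> : S = cube `&` S.
  apply/seteqP; split => [f Sf|f [] //]; split => // x y.
  rewrite /= in_itv /= (hS _ Sf x).1 -(hS _ Sf x).2 (bigD1 y) //= lerDl.
  by apply: sumr_ge0 => *; exact: (hS _ Sf x).1.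
apply: compact_closedI cS.
apply: (@tychonoff X (fun _ => Y -> R) (fun _ => [set g | forall y, _ (g y)])) => _.
apply: (@tychonoff Y (fun _ => R) (fun _ => `[(0:R), 1]%classic)) => _.
exact: segment_compact.
Qed.

Lemma hausdorff_kernels X Y : hausdorff_space (X -> Y -> R).
Proof. by apply: hausdorff_product => _; apply: hausdorff_product => _; exact: Rhausdorff. Qed.

Lemma closed_kcomp_image X Y Z (S : set (X -> Y -> R)) (g : Y -> Z -> R) :
  closed S -> (forall f, S f -> is_experiment f) ->
  closed [set kcomp f g | f in S].
Proof.
move=> cS hS; apply: compact_closed; first exact: hausdorff_kernels.
apply: continuous_compact; last exact: compact_experiments.
by apply: continuous_subspaceT; exact: continuous_kcomp.
Qed.

End Kernels.

Section Payoffs.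
Variables (R : realType) (Om A : finType).
Implicit Types (u : A -> Om -> R) (p : Om -> R) (M : finType).

Lemma u_pE u p M (s : Om -> M -> R) (t : M -> A -> R) :
  u_p u p s t = \sum_(w : Om) \sum_(a : A) p w * kcomp s t w a * u a w.
Proof.
apply: eq_bigr => w _; rewrite exchange_big /=; apply: eq_bigr => a _.
by rewrite /kcomp mulr_sumr mulr_suml; apply: eq_bigr => m _; rewrite !mulrA.
Qed.

Lemma u_p_kcomp u p M M' (s : Om -> M -> R) (t : M -> M' -> R) (t' : M' -> A -> R) :
  u_p u p (kcomp s t) t' = u_p u p s (kcomp t t').
Proof. by rewrite !u_pE kcompA. Qed.

Section Bounds.
Variables (p : Om -> R) (M : finType) (s : Om -> M -> R) (t : M -> A -> R).
Hypotheses (hp : is_dist p) (hs : is_experiment s) (ht : is_strategy t).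

Lemma u_p_cst (c : R) : u_p (fun _ _ => c) p s t = c.
Proof.
rewrite -[RHS]mul1r -hp.2 mulr_suml; apply: eq_bigr => w _.
transitivity (\sum_(m : M) p w * s w m * c).
  by apply: eq_bigr => m _; rewrite -mulr_suml -mulr_sumr (ht m).2 mulr1.
by rewrite -mulr_suml -mulr_sumr (hs w).2 mulr1.
Qed.

Lemma ler_u_p u v : (forall a w, u a w <= v a w) -> u_p u p s t <= u_p v p s t.
Proof.
move=> uv; apply: ler_sum => w _; apply: ler_sum => m _; apply: ler_sum => a _.
apply: ler_wpM2l => //; apply: mulr_ge0; last exact: (ht m).1.
by apply: mulr_ge0; [exact: hp.1 | exact: (hs w).1].
Qed.

(* [inf] and [sup] on a [realType] only mean something on bounded sets. *)
Definition payoff_bound u : R := \sum_(a : A) \sum_(w : Om) `|u a w|.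

Lemma payoff_le_bound u a w : `|u a w| <= payoff_bound u.
Proof.
rewrite /payoff_bound (bigD1 a) //= (bigD1 w) //= -addrA lerDl.
by rewrite addr_ge0 // sumr_ge0 // => *; rewrite sumr_ge0.
Qed.

Lemma u_p_bound u : - payoff_bound u <= u_p u p s t <= payoff_bound u.
Proof.
rewrite -[X in X <= _ <= _](u_p_cst) -[X in _ <= _ <= X](u_p_cst).
by apply/andP; split; apply: ler_u_p => a w; have := payoff_le_bound u a w;
  rewrite ler_norml => /andP[].
Qed.

End Bounds.
End Payoffs.

Section Persuasion.
Variables (R : realType) (Om A : finType) (P : set (Om -> R)).
Implicit Types (u : A -> Om -> R) (M : finType).

Lemma U_amb_set1 u M (s : Om -> M -> R) (t : M -> A -> R) :
  U_amb P u [set s] t = u_mm P u s t.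
Proof. by rewrite /U_amb image_set1 inf1. Qed.

Lemma is_amb_experiment_set1 M (s : Om -> M -> R) :
  is_experiment s -> is_amb_experiment [set s].
Proof.
move=> hs; split; first by exists s.
split; first by apply: compact_closed; [exact: hausdorff_kernels | exact: compact_set1].
split; last by move=> _ ->.
by move=> x y l; rewrite !in_setE => -> ->; rewrite convmm.
Qed.

Lemma BR_amb_set1 ur M (s : Om -> M -> R) (t : M -> A -> R) :
  BR P ur s t -> BR_amb P ur [set s] t.
Proof. by move=> [ht hbr]; split => // t' /hbr; rewrite !U_amb_set1. Qed.

Lemma V_amb_witness us ur : V_stat P us ur < V_amb P us ur ->
  exists M (S : set (Om -> M -> R)) (tau : M -> A -> R),
    [/\ is_amb_experiment S, BR_amb P ur S tau & V_stat P us ur < U_amb P us S tau].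
Proof.
rewrite /V_amb; set Samb := [set v | _] => hlt.
have [Samb0|/set0P/negP/negPn/eqP Samb0] := pselect (Samb !=set0).
  have [_ [M [S [tau [hS [hbr ->]]]]] hv] := sup_gt Samb0 hlt.
  by exists M, S, tau.
(* [sup set0 = 0], and each statistical value is the ambiguous value of a
   singleton, so both suprema would be [0]. *)
move: hlt; rewrite Samb0 sup0.
rewrite /V_stat (_ : [set v | _] = set0) ?sup0 ?ltxx //.
apply/seteqP; split => // _ [M [s [t [hs [hbr ->]]]]]; rewrite -Samb0.
exists M, [set s], t.
split; first exact: is_amb_experiment_set1.
by split; [exact: BR_amb_set1 | rewrite U_amb_set1].
Qed.

Section Garbling.
Variables (M : finType) (S : set (Om -> M -> R)) (tau : M -> A -> R).
Local Notation S_tau := [set kcomp s tau | s in S].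

Lemma U_amb_kcomp u (t : A -> A -> R) :
  U_amb P u S_tau t = U_amb P u S (kcomp tau t).
Proof.
rewrite /U_amb image_comp; congr inf; apply: eq_imagel => s _ /=.
by rewrite /u_mm; congr inf; apply: eq_imagel => p _; exact: u_p_kcomp.
Qed.

Lemma is_amb_experiment_kcomp :
  is_amb_experiment S -> is_strategy tau -> is_amb_experiment S_tau.
Proof.
move=> [[s0 S0] [cS [convS hS]]] htau; split; first by exists (kcomp s0 tau), s0.
split; first exact: closed_kcomp_image.
split=> [x y l|_ [s Ss <-]]; last exact: kcomp_dist (hS _ Ss) htau.
rewrite !in_setE => -[s1 S1 <-] [s2 S2 <-]; rewrite -kcomp_conv.
by eexists => //; rewrite -in_setE; apply: convS; rewrite in_setE.
Qed.

Lemma BR_amb_kcomp_obedient ur :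
  BR_amb P ur S tau -> BR_amb P ur S_tau (@obedient R A).
Proof.
move=> [htau hbr]; split=> [|t ht]; first exact: obedient_strategy.
by rewrite !U_amb_kcomp kcomp_obedient; apply: hbr; exact: kcomp_dist.
Qed.

End Garbling.

Section Bounded.
Hypotheses (P0 : P !=set0) (Pd : forall p, P p -> is_dist p).

Lemma u_mm_bound u M (s : Om -> M -> R) (t : M -> A -> R) :
  is_experiment s -> is_strategy t ->
  - payoff_bound u <= u_mm P u s t <= payoff_bound u.
Proof.
move=> hs ht; have [p0 Pp0] := P0.
have /andP[lb0 ub0] := u_p_bound (Pd Pp0) hs ht u.
have lb : lbound [set u_p u p s t | p in P] (- payoff_bound u).
  by move=> _ [p Pp <-]; have /andP[] := u_p_bound (Pd Pp) hs ht u.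
apply/andP; split; first by apply: lb_le_inf => //; exists (u_p u p0 s t), p0.
by apply: le_trans ub0; apply: ge_inf; [exists (- payoff_bound u) | exists p0].
Qed.

Lemma U_amb_le_u_mm u M (S : set (Om -> M -> R)) (s : Om -> M -> R)
    (t : M -> A -> R) :
  (forall s, S s -> is_experiment s) -> is_strategy t -> S s ->
  U_amb P u S t <= u_mm P u s t.
Proof.
move=> hS ht Ss; apply: ge_inf; last by exists s.
exists (- payoff_bound u) => _ [s' Ss' <-].
by have /andP[] := u_mm_bound u (hS _ Ss') ht.
Qed.

Lemma u_mm_le_V_stat us ur M (s : Om -> M -> R) (t : M -> A -> R) :
  is_experiment s -> BR P ur s t -> u_mm P us s t <= V_stat P us ur.
Proof.
move=> hs hbr; apply: ub_le_sup; last by exists M, s, t.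
exists (payoff_bound us) => _ [M' [s' [t' [hs' [[ht' _] ->]]]]].
by have /andP[] := u_mm_bound us hs' ht'.
Qed.

End Bounded.
End Persuasion.

Theorem lemma2 (R : realType) (Om A : finType) (P : set (Om -> R))
  (us ur : A -> Om -> R) :
  P !=set0 -> (forall p, P p -> is_dist p) -> closed P -> convex_set P ->
  V_stat P us ur < V_amb P us ur ->
  exists Sigma : set (Om -> A -> R),
    is_amb_experiment Sigma /\
    BR_amb P ur Sigma (@obedient R A) /\
    (forall sigma, Sigma sigma -> ~ BR P ur sigma (@obedient R A)).
Proof.
move=> P0 Pd _ _ /V_amb_witness[M [S [tau [hS hBR hgt]]]].
have Stau_amb := is_amb_experiment_kcomp hS hBR.1.
have Stau_exp := Stau_amb.2.2.2.
exists [set kcomp s tau | s in S]; split; last split.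
- exact: Stau_amb.
- exact: BR_amb_kcomp_obedient.
- move=> sigma Ssigma /(u_mm_le_V_stat P0 Pd us (Stau_exp _ Ssigma)) hle.
  have := U_amb_le_u_mm P0 Pd us Stau_exp (@obedient_strategy R A) Ssigma.
  rewrite (U_amb_kcomp P S tau) kcomp_obedient => hge.
  by have := lt_le_trans hgt (le_trans hge hle); rewrite ltxx.
Qed.
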